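(* Let $k\in\mathbb{N}$, $\gamma\in\mathbb{N}$, and let $p_0,\dots,p_k$ be positive reals summing to $1$. Let $X_1,\dots,X_k$ have the negative multinomial distribution $$\Pr\{X_i=x_i,\ i=1,\dots,k\}=\frac\gamma n\,\frac{n!}{\prod_{i=0}^kx_i!}\prod_{i=0}^kp_i^{x_i},\qquad x_1,\dots,x_k\in\mathbb{Z}^+,$$ where $x_0=\gamma$ and $n=\sum_{i=0}^kx_i$. Let $X_0=\gamma$ and $\boldsymbol{X}=[X_0,\dots,X_k]^\top$. Let $z_0=\gamma$, let $z_1,\dots,z_k$ be nonnegative integers, $n=\sum_{i=0}^kz_i$, $\boldsymbol{z}=[z_0,\dots,z_k]^\top$, $\widehat\mu_i=np_i$ ($i=0,\dots,k$), $\widehat{\boldsymbol{\mu}}=[\widehat\mu_0,\dots,\widehat\mu_k]^\top$. Then $$\Pr\{\boldsymbol{X}\boldsymbol{\prec}\boldsymbol{z}\}\le\prod_{i=0}^k\Big(\frac{\widehat\mu_i}{z_i}\Big)^{z_i}\ \text{ if }\boldsymbol{z}\boldsymbol{\prec}\widehat{\boldsymbol{\mu}},\qquad \Pr\{\boldsymbol{X}\boldsymbol{\succ}\boldsymbol{z}\}\le\prod_{i=0}^k\Big(\frac{\widehat\mu_i}{z_i}\Big)^{z_i}\ \text{ if }\boldsymbol{z}\boldsymbol{\succ}\widehat{\boldsymbol{\mu}}.$$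
   Context: $\mathbb{Z}^+$ is the set of nonnegative integers. For vectors $\boldsymbol{x}=[x_0,\dots,x_k]^\top,\boldsymbol{y}=[y_0,\dots,y_k]^\top$, $\boldsymbol{x}\boldsymbol{\prec}\boldsymbol{y}$ means $x_i\le y_i$ for $i=1,\dots,k$ (index $0$ is not compared), and $\boldsymbol{x}\boldsymbol{\succ}\boldsymbol{y}$ means $x_i\ge y_i$ for $i=1,\dots,k$. The convention $0^0=1$ is used. *)

From HB Require Import structures.
From mathcomp Require Import all_boot all_order all_algebra.
From mathcomp Require Import all_classical all_reals.
From mathcomp Require Import ereal esum.
Set Implicit Arguments. Unset Strict Implicit. Unset Printing Implicit Defensive.
Import Order.TTheory GRing.Theory Num.Theory.
Local Open Scope ring_scope.

Definition vsum (k : nat) (x : {ffun 'I_k.+1 -> nat}) : nat := (\sum_(i < k.+1) x i)%N.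

Definition negmult_pmf (R : realType) (k gamma : nat) (p : 'I_k.+1 -> R)
    (x : {ffun 'I_k.+1 -> nat}) : R :=
  (gamma%:R / (vsum x)%:R) * ((vsum x)`!%:R / (\prod_(i < k.+1) (x i)`!)%:R)
  * \prod_(i < k.+1) p i ^+ x i.

Definition nm_support (k gamma : nat) : set {ffun 'I_k.+1 -> nat} :=
  [set x | x ord0 = gamma].

Definition vprec (k : nat) (x y : 'I_k.+1 -> nat) : Prop :=
  forall i : 'I_k.+1, i != ord0 -> (x i <= y i)%N.

Definition nm_prob (R : realType) (k gamma : nat) (p : 'I_k.+1 -> R)
    (A : set {ffun 'I_k.+1 -> nat}) : \bar R :=
  \esum_(x in @nm_support k gamma `&` A) (negmult_pmf gamma p x)%:E.

(* prod_{i=0}^k (mu_i / z_i)^{z_i}, with 0^0 = 1 *)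
Definition chernoff_bound (R : realType) (k : nat) (mu : 'I_k.+1 -> R)
    (z : 'I_k.+1 -> nat) : R :=
  \prod_(i < k.+1) (mu i / (z i)%:R) ^+ z i.

From HB Require Import structures.
From mathcomp Require Import all_boot all_order all_algebra.
From mathcomp Require Import all_classical all_reals.
From mathcomp Require Import ereal esum.
From mathcomp Require Import ring lra.
Import Order.TTheory GRing.Theory Num.Theory.
Set Implicit Arguments.
Unset Strict Implicit.
Unset Printing Implicit Defensive.
Local Open Scope ring_scope.

(* Chernoff's method with an exponential tilt. For t_1, ..., t_k >= 0 with
   \sum_(i >= 1) p_i t_i < 1, expanding (1 - \sum_(i >= 1) p_i t_i)^-gamma as a negative
   multinomial series shows E[\prod_i t_i^X_i] <= (p_0 / (1 - \sum_(i >= 1) p_i t_i))^gamma;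
   only finite partial sums are needed, and they are bounded one variable at a time by the
   negative binomial series. If \prod_i t_i^z_i <= \prod_i t_i^x_i on an event, Markov's
   inequality bounds its probability by that moment divided by \prod_i t_i^z_i. The tilt
   t_i = z_i / (n p_i) is <= 1 below mu and >= 1 above it, which makes both tail events
   of this form, and for it the bound evaluates to exactly \prod_i (mu_i / z_i)^z_i. *)

(* Written as a product of binomials so that series in it can be summed one variable at a
   time. *)
Fixpoint negmult_coef (r : nat) (s : seq nat) : nat :=
  if s is j :: s' then ('C(r + j, j) * negmult_coef (r + j) s')%N else 1%N.

Lemma negmult_coef_fact r s :
  (negmult_coef r s * (r`! * \prod_(j <- s) j`!))%N = (r + \sum_(j <- s) j)`!.
Proof.
elim: s r => [|j s IH] r /=; first by rewrite !big_nil muln1 mul1n addn0.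
have := bin_fact (leq_addl r j); rewrite addnK !big_cons addnA -IH => <-.
ring.
Qed.

Fixpoint box (k M : nat) : seq (seq nat) :=
  if k is k'.+1 then [seq j :: s | j <- iota 0 M, s <- box k' M] else [:: [::]].

Lemma box_uniq k M : uniq (box k M).
Proof.
elim: k => [|k IH] //=; apply: allpairs_uniq => //; first exact: iota_uniq.
by move=> [? ?] [? ?] _ _ [-> ->].
Qed.

Lemma mem_box k M s : size s = k -> all (fun j => j < M)%N s -> s \in box k M.
Proof.
elim: k s => [|k IH] [|j s] //= [hs] /andP[hj hall].
by apply: (allpairs_f (fun j s => j :: s)); [rewrite mem_iota | exact: IH].
Qed.

Section NegativeMultinomialSeries.
Variable R : realFieldType.
Implicit Types (y : R) (qs : seq R).

Lemma big_box_recl (F : seq nat -> R) k M :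
  \sum_(s <- box k.+1 M) F s = \sum_(j < M) \sum_(s <- box k M) F ((j : nat) :: s).
Proof. by rewrite big_allpairs_dep /= -{1}(subn0 M) big_mkord. Qed.

Lemma psumr_uniq_sub_le (T : eqType) (L B : seq T) (f : T -> R) :
  uniq L -> uniq B -> {subset L <= B} -> {in B, forall x, 0 <= f x} ->
  \sum_(x <- L) f x <= \sum_(x <- B) f x.
Proof.
move=> uL uB sLB f0.
have -> : \sum_(x <- L) f x = \sum_(x <- B | x \in L) f x.
  rewrite -[RHS]big_filter; apply: perm_big; apply: uniq_perm => //; first exact: filter_uniq.
  by move=> x; rewrite mem_filter; case xL: (x \in L) => //=; rewrite sLB.
rewrite [X in _ <= X](bigID (mem L)) /= lerDl big_seq_cond.
by apply: sumr_ge0 => x /andP[/f0].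
Qed.

Definition negbin_sum (r M : nat) y : R := \sum_(j < M) 'C(r + j, j)%:R * y ^+ j.

Lemma negbin_sum_leS r M y : 0 <= y -> negbin_sum r M y <= negbin_sum r M.+1 y.
Proof. by move=> y0; rewrite /negbin_sum big_ord_recr /= lerDl mulr_ge0 ?exprn_ge0. Qed.

Lemma negbin_sumSS r M y :
  negbin_sum r.+1 M.+1 y = negbin_sum r M.+1 y + y * negbin_sum r.+1 M y.
Proof.
rewrite /negbin_sum big_ord_recl [in RHS]big_ord_recl /= !addn0 !bin0 -addrA.
congr (_ + _); rewrite mulr_sumr -big_split /=; apply: eq_bigr => i _.
rewrite /bump /= add1n addnS binS natrD mulrDl exprS addSn addnS.
by congr (_ + _); rewrite mulrCA.
Qed.

(* (1 - y)^-(r+1) = \sum_j 'C(r + j, j) y^j; induction on r via Pascal's rule. *)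
Lemma negbin_sum_le r M y : 0 <= y < 1 -> (1 - y) ^+ r.+1 * negbin_sum r M y <= 1.
Proof.
move=> /andP[y0 y1]; elim: r M => [|r IH] M.
  rewrite /negbin_sum expr1.
  under eq_bigr do rewrite add0n binn mul1r.
  by rewrite -opprB mulNr -subrX1 opprB lerBlDr lerDl exprn_ge0.
case: M => [|M]; first by rewrite /negbin_sum big_ord0 mulr0.
have step : (1 - y) * negbin_sum r.+1 M.+1 y <= negbin_sum r M.+1 y.
  rewrite mulrBl mul1r {1}negbin_sumSS lerBlDr lerD2l.
  by apply: ler_wpM2l => //; apply: negbin_sum_leS.
rewrite exprSr -mulrA; apply: le_trans (IH M.+1).
by apply: ler_wpM2l step; rewrite exprn_ge0 // subr_ge0 ltW.
Qed.

Fixpoint monomial qs (s : seq nat) : R :=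
  match qs, s with q :: qs', j :: s' => q ^+ j * monomial qs' s' | _, _ => 1 end.

Lemma monomial_ge0 qs s : all (>= 0) qs -> 0 <= monomial qs s.
Proof.
elim: qs s => [|q qs IH] [|j s] //= /andP[q0 qs0].
by rewrite mulr_ge0 ?exprn_ge0 ?IH.
Qed.

Lemma monomial_map (I : Type) (l : seq I) (f : I -> R) (g : I -> nat) :
  monomial (map f l) (map g l) = \prod_(i <- l) f i ^+ g i.
Proof. by elim: l => [|i l IH] /=; rewrite ?big_nil ?big_cons ?IH. Qed.

(* Summing out the first
   variable q leaves a univariate series in y = q / (1 - S), with S the sum of the others,
   since 1 - q - S = (1 - y) (1 - S). *)
Lemma negmult_sum_le qs r M : all (>= 0) qs -> \sum_(q <- qs) q < 1 ->
  (1 - \sum_(q <- qs) q) ^+ r.+1 *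
    \sum_(s <- box (size qs) M) (negmult_coef r s)%:R * monomial qs s <= 1.
Proof.
elim: qs r => [|q qs IH] r.
  by move=> _ _; rewrite big_seq1 big_nil subr0 expr1n !mul1r.
move=> /andP[q0 qs0]; rewrite big_cons => hS.
set S := \sum_(q <- qs) q in hS IH *.
have S0 : 0 <= S by rewrite /S big_seq sumr_ge0 // => x /(allP qs0).
set a : R := 1 - S; have a0 : 0 < a by rewrite /a; lra.
set T := fun r' => \sum_(s <- box (size qs) M) (negmult_coef r' s)%:R * monomial qs s.
have T_le r' : T r' <= (a ^+ r'.+1)^-1.
  by rewrite -[X in _ <= X]mulr1 ler_pdivlMl ?exprn_gt0 // IH //; lra.
have y01 : 0 <= q / a < 1.
  by rewrite divr_ge0 ?(ltW a0) //= ltr_pdivrMr // mul1r /a; lra.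
apply: le_trans (negbin_sum_le r M y01).
rewrite big_box_recl.
have -> : 1 - (q + S) = (1 - q / a) * a.
  by rewrite mulrBl mul1r divfK ?gt_eqF // /a; ring.
rewrite exprMn -mulrA; apply: ler_wpM2l.
  by case/andP: y01 => _ /ltW; rewrite -subr_ge0 => /exprn_ge0->.
rewrite mulr_sumr /negbin_sum; apply: ler_sum => j _.
have -> : \sum_(s <- box (size qs) M)
      (negmult_coef r ((j : nat) :: s))%:R * monomial (q :: qs) ((j : nat) :: s)
    = 'C(r + j, j)%:R * q ^+ j * T (r + j)%N.
  rewrite /T mulr_sumr; apply: eq_bigr => s _ /=.
  by rewrite natrM -!mulrA; congr (_ * _); rewrite mulrCA.
have -> : 'C(r + j, j)%:R * (q / a) ^+ j
    = a ^+ r.+1 * ('C(r + j, j)%:R * q ^+ j * (a ^+ (r + j).+1)^-1).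
  by rewrite expr_div_n -addSn exprD invfM; field; rewrite !expf_neq0 ?gt_eqF.
apply: ler_wpM2l; first by rewrite exprn_ge0 ?ltW.
by apply: ler_wpM2l; [rewrite mulr_ge0 ?exprn_ge0 | exact: T_le].
Qed.

End NegativeMultinomialSeries.

Definition tailv (T : Type) (k : nat) (f : 'I_k.+1 -> T) : seq T :=
  [seq f (lift ord0 i) | i <- enum 'I_k].

Lemma big_tailv (R T : Type) (idx : R) (op : Monoid.law idx) k (f : 'I_k.+1 -> T)
    (F : T -> R) :
  \big[op/idx]_(j <- tailv f) F j = \big[op/idx]_(i < k) F (f (lift ord0 i)).
Proof. by rewrite big_map enumT unlock. Qed.

Lemma size_tailv (T : Type) k (f : 'I_k.+1 -> T) : size (tailv f) = k.
Proof. by rewrite size_map size_enum_ord. Qed.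

Lemma tailv_inj (T : eqType) k (f g : {ffun 'I_k.+1 -> T}) :
  f ord0 = g ord0 -> tailv f = tailv g -> f = g.
Proof.
move=> fg0 /eq_in_map fg; apply/ffunP => i.
by case: (unliftP ord0 i) => [j ->|->] //; apply: fg; rewrite mem_enum.
Qed.

Lemma monomial_tailv (R : realFieldType) k (q : 'I_k.+1 -> R) (x : 'I_k.+1 -> nat) :
  monomial (tailv q) (tailv x) = \prod_(i < k) q (lift ord0 i) ^+ x (lift ord0 i).
Proof. by rewrite monomial_map enumT unlock. Qed.

Section NegativeMultinomialChernoff.
Variable R : realType.
Implicit Types (k r : nat).

Lemma esum_le_seq (T : choiceType) (S : set T) (f : T -> R) (c : R) :
  (forall L : seq T, uniq L -> {in L, forall x, S x} -> \sum_(x <- L) f x <= c) ->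
  (\esum_(x in S) (f x)%:E <= c%:E)%E.
Proof.
move=> hL; apply: ge_ereal_sup => _ [X [finX XS] <-].
rewrite fsbig_finite // sumEFin lee_fin; apply: hL; first exact: finmap.fset_uniq.
by move=> x; rewrite in_fset_set // inE => /XS.
Qed.

Lemma negmult_pmfE k r (p : 'I_k.+1 -> R) (x : {ffun 'I_k.+1 -> nat}) : x ord0 = r.+1 ->
  negmult_pmf r.+1 p x = (negmult_coef r (tailv x))%:R * \prod_(i < k.+1) p i ^+ x i.
Proof.
move=> x0; rewrite /negmult_pmf /vsum; congr (_ * _).
have := negmult_coef_fact r (tailv x); rewrite !big_tailv !big_ord_recl x0.
set m := (\sum_(i < k) _)%N; set P := (\prod_(i < k) _)%N => hc.
have P0 : (P%:R : R) != 0 by rewrite pnatr_eq0 -lt0n prodn_gt0 // => i; exact: fact_gt0.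
have fr0 : (r`!%:R : R) != 0 by rewrite pnatr_eq0 -lt0n fact_gt0.
have -> : (negmult_coef r (tailv x))%:R = (r + m)`!%:R / (r`! * P)%:R :> R.
  by rewrite -hc natrM mulfK // natrM mulf_neq0.
rewrite addSn !factS !natrM; field.
by rewrite P0 fr0 -natrD !nat1r !pnatr_eq0.
Qed.

Lemma negmult_pmf_ge0 k gamma (p : 'I_k.+1 -> R) (x : {ffun 'I_k.+1 -> nat}) :
  (forall i, 0 <= p i) -> 0 <= negmult_pmf gamma p x.
Proof.
move=> p0; rewrite /negmult_pmf !mulr_ge0 ?divr_ge0 //.
by apply: prodr_ge0 => i _; rewrite exprn_ge0.
Qed.

Lemma negmult_mgf_le k r (p t : 'I_k.+1 -> R) (L : seq {ffun 'I_k.+1 -> nat}) :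
  (forall i, 0 <= p i) -> (forall i, 0 <= t i) ->
  \sum_(i < k) p (lift ord0 i) * t (lift ord0 i) < 1 ->
  uniq L -> {in L, forall x : {ffun 'I_k.+1 -> nat}, x ord0 = r.+1} ->
  \sum_(x <- L) negmult_pmf r.+1 p x * \prod_(i < k) t (lift ord0 i) ^+ x (lift ord0 i)
  <= p ord0 ^+ r.+1 / (1 - \sum_(i < k) p (lift ord0 i) * t (lift ord0 i)) ^+ r.+1.
Proof.
move=> p0 t0 S1 uL L0.
set qs := tailv (fun i => p i * t i).
have qs0 : all (>= 0) qs by apply/allP => _ /mapP[i _ ->]; rewrite mulr_ge0.
have Sqs : \sum_(i < k) p (lift ord0 i) * t (lift ord0 i) = \sum_(q <- qs) q.
  by rewrite big_tailv.
have termE x : x \in L ->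
    negmult_pmf r.+1 p x * \prod_(i < k) t (lift ord0 i) ^+ x (lift ord0 i)
    = p ord0 ^+ r.+1 * ((negmult_coef r (tailv x))%:R * monomial qs (tailv x)).
  move=> /L0 x0; rewrite negmult_pmfE // big_ord_recl x0 /qs monomial_tailv.
  under [X in _ = _ * (_ * X)]eq_bigr do rewrite exprMn.
  by rewrite big_split /=; ring.
rewrite big_seq (eq_bigr _ termE) -big_seq -mulr_sumr Sqs.
rewrite -(big_map (fun x : {ffun 'I_k.+1 -> nat} => tailv x) xpredT
  (fun s => (negmult_coef r s)%:R * monomial qs s)).
apply: ler_wpM2l; first by rewrite exprn_ge0.
have c0 : 0 < (1 - \sum_(q <- qs) q) ^+ r.+1 by rewrite exprn_gt0 // subr_gt0 -Sqs.
rewrite -[X in _ <= X]mul1r ler_pdivlMr // mulrC.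
set M := (\sum_(x <- L) vsum x).+1.
apply: le_trans (negmult_sum_le r M qs0 _); last by rewrite -Sqs.
apply: ler_wpM2l; first exact: ltW.
rewrite /qs size_tailv; apply: psumr_uniq_sub_le.
- by rewrite map_inj_in_uniq // => x y /L0 x0 /L0 y0; apply: tailv_inj; rewrite x0 y0.
- exact: box_uniq.
- move=> _ /mapP[x xL ->]; apply: mem_box; first exact: size_tailv.
  apply/allP => _ /mapP[i _ ->]; rewrite /M ltnS.
  apply: (@leq_trans (vsum x)); first by rewrite /vsum (bigD1 (lift ord0 i)) //= leq_addr.
  by rewrite (bigD1_seq x) //= leq_addr.
- by move=> s _; rewrite mulr_ge0 ?monomial_ge0.
Qed.

Lemma nm_prob_le_tilted k r (p t : 'I_k.+1 -> R) (A : set {ffun 'I_k.+1 -> nat}) (c : R) :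
  (forall i, 0 <= p i) -> (forall i, 0 <= t i) ->
  \sum_(i < k) p (lift ord0 i) * t (lift ord0 i) < 1 -> 0 < c ->
  (forall x : {ffun 'I_k.+1 -> nat}, x ord0 = r.+1 -> A x ->
     c <= \prod_(i < k) t (lift ord0 i) ^+ x (lift ord0 i)) ->
  (nm_prob r.+1 p A <= (c^-1 * (p ord0 ^+ r.+1 /
     (1 - \sum_(i < k) p (lift ord0 i) * t (lift ord0 i)) ^+ r.+1))%:E)%E.
Proof.
move=> p0 t0 S1 c0 hA; apply: esum_le_seq => L uL LA.
apply: le_trans (_ : _ <= c^-1 * \sum_(x <- L) negmult_pmf r.+1 p x *
    \prod_(i < k) t (lift ord0 i) ^+ x (lift ord0 i)) _.
  rewrite mulr_sumr big_seq [X in _ <= X]big_seq; apply: ler_sum => x /LA[x0 Ax].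
  rewrite ler_pdivlMl // mulrC.
  by apply: ler_wpM2l; [exact: negmult_pmf_ge0 | exact: hA].
apply: ler_wpM2l; first by rewrite invr_ge0 ltW.
by apply: negmult_mgf_le => // x /LA[].
Qed.

Definition chernoff_tilt k (p : 'I_k.+1 -> R) (z : {ffun 'I_k.+1 -> nat}) i : R :=
  (z i)%:R / ((vsum z)%:R * p i).

Section ChernoffTilt.
Variables (k r : nat) (p : 'I_k.+1 -> R) (z : {ffun 'I_k.+1 -> nat}).
Hypotheses (p_gt0 : forall i, 0 < p i) (z0 : z ord0 = r.+1).

Lemma vsumE : vsum z = (r.+1 + \sum_(i < k) z (lift ord0 i))%N.
Proof. by rewrite /vsum big_ord_recl z0. Qed.

Lemma mass_gt0 i : 0 < (vsum z)%:R * p i.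
Proof. by rewrite mulr_gt0 // ltr0n vsumE. Qed.

Lemma chernoff_tilt_ge0 i : 0 <= chernoff_tilt p z i.
Proof. by rewrite divr_ge0 // ltW // mass_gt0. Qed.

Lemma chernoff_tilt_le1 i : (z i)%:R <= (vsum z)%:R * p i -> chernoff_tilt p z i <= 1.
Proof. by rewrite /chernoff_tilt ler_pdivrMr ?mass_gt0 // mul1r. Qed.

Lemma chernoff_tilt_ge1 i : (vsum z)%:R * p i <= (z i)%:R -> 1 <= chernoff_tilt p z i.
Proof. by rewrite /chernoff_tilt ler_pdivlMr ?mass_gt0 // mul1r. Qed.

Lemma sum_chernoff_tilt :
  \sum_(i < k) p (lift ord0 i) * chernoff_tilt p z (lift ord0 i) = 1 - r.+1%:R / (vsum z)%:R.
Proof.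
have n0 : (vsum z)%:R != 0 :> R by rewrite pnatr_eq0 vsumE.
have -> : \sum_(i < k) p (lift ord0 i) * chernoff_tilt p z (lift ord0 i)
    = (\sum_(i < k) z (lift ord0 i))%:R / (vsum z)%:R.
  rewrite natr_sum mulr_suml; apply: eq_bigr => i _.
  by rewrite /chernoff_tilt; field; rewrite n0 gt_eqF.
have -> : (\sum_(i < k) z (lift ord0 i))%:R = (vsum z)%:R - r.+1%:R :> R.
  by rewrite vsumE natrD; ring.
by field.
Qed.

Lemma prod_chernoff_tilt_gt0 :
  0 < \prod_(i < k) chernoff_tilt p z (lift ord0 i) ^+ z (lift ord0 i).
Proof.
apply: prodr_gt0 => i _; case: (posnP (z (lift ord0 i))) => [-> | zi0].
  by rewrite expr0 ltr01.
by rewrite exprn_gt0 // divr_gt0 ?ltr0n ?mass_gt0.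
Qed.

Lemma chernoff_boundE :
  chernoff_bound (fun i => (vsum z)%:R * p i) z
  = (\prod_(i < k) chernoff_tilt p z (lift ord0 i) ^+ z (lift ord0 i))^-1 *
    (p ord0 ^+ r.+1 /
     (1 - \sum_(i < k) p (lift ord0 i) * chernoff_tilt p z (lift ord0 i)) ^+ r.+1).
Proof.
rewrite sum_chernoff_tilt /chernoff_bound big_ord_recl z0 -prodfV mulrC.
have -> : 1 - (1 - r.+1%:R / (vsum z)%:R) = r.+1%:R / (vsum z)%:R :> R by ring.
rewrite -exprVn invf_div -exprMn; congr (_ * _).
  by apply: eq_bigr => i _; rewrite -exprVn invf_div.
by congr (_ ^+ _); field.
Qed.

Lemma nm_prob_le_chernoff_bound (A : set {ffun 'I_k.+1 -> nat}) :
  (forall x : {ffun 'I_k.+1 -> nat}, x ord0 = r.+1 -> A x ->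
     \prod_(i < k) chernoff_tilt p z (lift ord0 i) ^+ z (lift ord0 i)
     <= \prod_(i < k) chernoff_tilt p z (lift ord0 i) ^+ x (lift ord0 i)) ->
  (nm_prob r.+1 p A <= (chernoff_bound (fun i => (vsum z)%:R * p i) z)%:E)%E.
Proof.
move=> hA; rewrite chernoff_boundE.
apply: nm_prob_le_tilted hA; last exact: prod_chernoff_tilt_gt0.
- by move=> i; apply: ltW.
- exact: chernoff_tilt_ge0.
- by rewrite sum_chernoff_tilt ltrBlDr ltrDl divr_gt0 // ltr0n vsumE.
Qed.

End ChernoffTilt.

End NegativeMultinomialChernoff.

Theorem corollary2 (R : realType) (k gamma : nat) (p : 'I_k.+1 -> R)
  (hgamma : (0 < gamma)%N)
  (hp : forall i, 0 < p i) (hp1 : \sum_(i < k.+1) p i = 1)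
  (z : {ffun 'I_k.+1 -> nat}) (hz0 : z ord0 = gamma) :
  let n := vsum z in
  let mu := fun i => n%:R * p i in
  ((forall i : 'I_k.+1, i != ord0 -> (z i)%:R <= mu i) ->
     (@nm_prob R k gamma p [set x | vprec x z] <= (chernoff_bound mu z)%:E)%E) /\
  ((forall i : 'I_k.+1, i != ord0 -> mu i <= (z i)%:R) ->
     (@nm_prob R k gamma p [set x | vprec z x] <= (chernoff_bound mu z)%:E)%E).
Proof.
move=> n mu; case: gamma hgamma hz0 => // r _ hz0.
have lift_neq0 (i : 'I_k) : lift ord0 i != ord0 by rewrite eq_sym neq_lift.
split=> hmu; apply: nm_prob_le_chernoff_bound => // x _ hx;
  apply: ler_prod => i _; rewrite exprn_ge0 ?(chernoff_tilt_ge0 hp hz0) //=.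
- apply: ler_wiXn2l; last exact: (hx _ (lift_neq0 i)).
    exact: chernoff_tilt_ge0 hp hz0 _.
  by apply: (chernoff_tilt_le1 hp hz0); apply: hmu.
- apply: (ler_weXn2l _ (hx _ (lift_neq0 i))).
  by apply: (chernoff_tilt_ge1 hp hz0); apply: hmu.
Qed.
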